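(* Neither $Cond_{CB}$ nor $Lex_{CB}$ is universal: for each $R\in\{Cond,Lex\}$ there exist a stubbornness function $D$ and an epistemic space $\mathbb{S}$ that is identifiable in the limit (by some learner) but is not identifiable in the limit by $R_{CB}$ with stubbornness function $D$.
   Context: An epistemic space is a pair $\mathbb{S}=(S,\mathcal{O})$ where $S$ is a non-empty, at most countable set of worlds and $\mathcal{O}\subseteq\mathcal{P}(S)$ is a set of observables. A data stream is an infinite sequence $\vec O=(O_0,O_1,\ldots)$ with each $O_i\in\mathcal{O}$; $\vec O[n]=(O_0,\ldots,O_{n-1})$. A stream is sound for $s\in S$ if $s\in O_n$ for all $n$, and complete for $s$ if every $O\in\mathcal{O}$ with $s\in O$ occurs in $\vec O$. A learner is any function mapping $\mathbb{S}$ and finite data sequences to subsets of $S$. A world $s$ is identified in the limit by a learner $L$ if for every stream $\vec O$ sound and complete for $s$ there is $k$ with $L(\mathbb{S},\vec O[n])=\{s\}$ for all $n\ge k$; $\mathbb{S}$ is identified by $L$ if every $s\in S$ is; $\mathbb{S}$ is identifiable in the limit if some learner identifies it. A plausibility space is $\mathbb{B}=(S,\mathcal{O},\preceq)$ with $\preceq$ a total preorder on $S$; $\min_\preceq X$ is the set of $\preceq$-minimal elements of $X$. One-step methods, for a proposition $p\subseteq S$, $\bar p=S\setminus p$: - $Cond_1(\mathbb{B},p)=(S\cap p,\mathcal{O},\preceq\cap((S\cap p)\times(S\cap p)))$. - $Lex_1(\mathbb{B},p)=(S,\mathcal{O},\preceq')$ with $t\preceq' w$ iff ($t,w\in p$ and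 $t\preceq w$) or ($t,w\in\bar p$ and $t\preceq w$) or ($t\in p$, $w\notin p$). A stubbornness function is any $D:\mathcal{P}(S)\to\mathbb{N}$. For a one-step method $R_1$, $R_{CB}(\mathbb{B},\lambda)=\mathbb{B}$ and $R_{CB}(\mathbb{B},\sigma\cdot p)=R_1(R_{CB}(\mathbb{B},\sigma),p)$ if $\#p(\sigma)\ge D(\bar p)$, otherwise $R_{CB}(\mathbb{B},\sigma\cdot p)=R_{CB}(\mathbb{B},\sigma)$, where $\#p(\sigma)$ is the number of occurrences of $p$ in $\sigma$. $Cond_{CB}$, $Lex_{CB}$ arise from $R_1=Cond_1,Lex_1$. The learner $L^\preceq_{R_{CB}}$ maps $\sigma$ to $\min_{\preceq'}S'$ where $R_{CB}((S,\mathcal{O},\preceq),\sigma)=(S',\mathcal{O},\preceq')$. $\mathbb{S}$ is identifiable by $R_{CB}$ if some total preorder $\preceq$ makes $L^\preceq_{R_{CB}}$ identify $\mathbb{S}$ in the limit. A method is universal if it identifies every epistemic space that is identifiable in the limit. *)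

(* Worlds are natural numbers (every at most countable set of
   worlds is, up to renaming, a subset of nat); sets are predicates. *)
From Stdlib Require Import List Arith ClassicalEpsilon.
Import ListNotations.

Definition set := nat -> Prop.
Definition rel := nat -> nat -> Prop.

Record epistemic_space := ES {
  worlds : set;
  observables : set -> Prop
}.

Definition wf_space (E : epistemic_space) : Prop :=
  (exists s, worlds E s) /\
  (forall o, observables E o -> forall x, o x -> worlds E x).

Definition stream := nat -> set.

Definition is_data_stream (E : epistemic_space) (str : stream) : Prop :=
  forall n, observables E (str n).

(* O[n] = (O_0, ..., O_{n-1}) *)
Definition prefix (str : stream) (n : nat) : list set := map str (seq 0 n).

Definition sound_for (str : stream) (s : nat) : Prop := forall n, str n s.

Definition complete_for (E : epistemic_space) (str : stream) (s : nat) : Prop :=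
  forall o, observables E o -> o s -> exists n, str n = o.

Definition learner := list set -> set.

Definition is_singleton (X : set) (s : nat) : Prop := forall x, X x <-> x = s.

Definition identifies_world (E : epistemic_space) (L : learner) (s : nat) : Prop :=
  forall str : stream, is_data_stream E str -> sound_for str s -> complete_for E str s ->
    exists k, forall n, k <= n -> is_singleton (L (prefix str n)) s.

Definition identifies (E : epistemic_space) (L : learner) : Prop :=
  forall s, worlds E s -> identifies_world E L s.

Definition identifiable (E : epistemic_space) : Prop :=
  exists L : learner, identifies E L.

Definition total_preorder_on (S : set) (le : rel) : Prop :=
  (forall x, S x -> le x x) /\
  (forall x y z, S x -> S y -> S z -> le x y -> le y z -> le x z) /\
  (forall x y, S x -> S y -> le x y \/ le y x).

(* Plausibility state (current worlds, current preorder); observables are unchanged. *)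
Definition pstate := (set * rel)%type.

Definition Cond1 (st : pstate) (p : set) : pstate :=
  (fun x => fst st x /\ p x, snd st).

Definition Lex1 (st : pstate) (p : set) : pstate :=
  (fst st, fun t w =>
     (p t /\ p w /\ snd st t w) \/ (~ p t /\ ~ p w /\ snd st t w) \/ (p t /\ ~ p w)).

Inductive method := Cond | Lex.

Definition one_step (R : method) : pstate -> set -> pstate :=
  match R with Cond => Cond1 | Lex => Lex1 end.

Definition compl (S p : set) : set := fun x => S x /\ ~ p x.

Definition occ (p : set) (sigma : list set) : nat :=
  length (filter (fun q => if excluded_middle_informative (q = p) then true else false) sigma).

Definition stubbornness := set -> nat.

(* R_CB: processes the sequence left to right; hist = already processed prefix *)
Fixpoint rcb_go (R : method) (D : stubbornness) (S : set)
    (hist : list set) (st : pstate) (rest : list set) : pstate :=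
  match rest with
  | [] => st
  | p :: r =>
      rcb_go R D S (hist ++ [p])
        (if D (compl S p) <=? occ p hist then one_step R st p else st) r
  end.

Definition RCB (R : method) (D : stubbornness) (S : set) (le : rel) (sigma : list set) : pstate :=
  rcb_go R D S [] (S, le) sigma.

Definition min_set (le : rel) (X : set) : set :=
  fun x => X x /\ forall y, X y -> le y x -> le x y.

Definition RCB_learner (R : method) (D : stubbornness) (E : epistemic_space) (le : rel) : learner :=
  fun sigma => let st := RCB R D (worlds E) le sigma in min_set (snd st) (fst st).

Definition identifiable_by (R : method) (D : stubbornness) (E : epistemic_space) : Prop :=
  exists le : rel, total_preorder_on (worlds E) le /\ identifies E (RCB_learner R D E le).

(* With stubbornness 1 every proposition is ignored the first time it is
   observed, and revising by a proposition true in every world changes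
   nothing.  Take the worlds 0 and 1 with observables {0,1} and {0}: the
   stream {0}, {0,1}, {0,1}, ... for world 0 then leaves the plausibility
   state exactly as the stream {0,1}, {0,1}, ... for world 1 does, so the
   two worlds receive the same conjecture forever.  Yet the learner that
   answers 0 once {0} has been observed, and 1 before, identifies the space. *)
From Stdlib Require Import List Arith Lia.
Import ListNotations.

Definition subset (A B : set) : Prop := forall x, A x -> B x.

Definition agrees (S : set) (le : rel) (st : pstate) : Prop :=
  (forall x, fst st x <-> S x) /\
  (forall x y, S x -> S y -> (snd st x y <-> le x y)).

Lemma one_step_agrees R S le st p :
  subset S p -> agrees S le st -> agrees S le (one_step R st p).
Proof.
  intros Hp [Hworlds Hle]; destruct R; simpl; unfold Cond1, Lex1; split; simpl.
  - intro x; rewrite Hworlds; specialize (Hp x); tauto.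
  - exact Hle.
  - exact Hworlds.
  - intros x y Hx Hy; rewrite <- (Hle x y Hx Hy).
    pose proof (Hp x Hx); pose proof (Hp y Hy); tauto.
Qed.

Lemma rcb_go_agrees R D S le rest : forall hist st,
  agrees S le st -> Forall (subset S) rest -> agrees S le (rcb_go R D S hist st rest).
Proof.
  induction rest as [|p rest IH]; intros hist st Hst Hrest; simpl; [exact Hst|].
  inversion_clear Hrest as [|? ? Hp Hrest'].
  apply IH; [|exact Hrest'].
  destruct (D (compl S p) <=? occ p hist); [apply one_step_agrees|]; assumption.
Qed.

Lemma min_set_agrees S le st x :
  agrees S le st -> (min_set (snd st) (fst st) x <-> min_set le S x).
Proof.
  intros [Hworlds Hle]; unfold min_set; split; intros [Hx Hmin].
  - assert (HSx : S x) by (apply Hworlds; exact Hx).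
    split; [exact HSx|]; intros y Hy Hyx.
    apply (Hle x y HSx Hy), Hmin; [apply Hworlds; exact Hy|].
    apply (Hle y x Hy HSx); exact Hyx.
  - split; [apply Hworlds; exact Hx|]; intros y Hy Hyx.
    assert (HSy : S y) by (apply Hworlds; exact Hy).
    apply (Hle x y Hx HSy), Hmin; [exact HSy|].
    apply (Hle y x HSy Hx); exact Hyx.
Qed.

Lemma RCB_learner_ignored_head R D E le p tl x :
  0 < D (compl (worlds E) p) -> Forall (subset (worlds E)) tl ->
  (RCB_learner R D E le (p :: tl) x <-> min_set le (worlds E) x).
Proof.
  intros Hstubborn Htl; unfold RCB_learner, RCB; simpl.
  replace (D (compl (worlds E) p) <=? occ p []) with false
    by (symmetry; apply Nat.leb_gt; exact Hstubborn).
  apply min_set_agrees, rcb_go_agrees; [split; simpl; tauto | exact Htl].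
Qed.

Lemma prefix_succ str n : prefix str (S n) = str 0 :: prefix (fun m => str (S m)) n.
Proof. unfold prefix; simpl; rewrite <- seq_shift, map_map; reflexivity. Qed.

Lemma Forall_prefix (P : set -> Prop) str n :
  (forall m, P (str m)) -> Forall P (prefix str n).
Proof.
  intro HP; apply Forall_forall; intros o Ho.
  apply in_map_iff in Ho; destruct Ho as [m [<- _]]; apply HP.
Qed.

Lemma In_prefix o str n : In o (prefix str n) <-> exists m, m < n /\ str m = o.
Proof.
  unfold prefix; rewrite in_map_iff; split.
  - intros [m [Hm Hin]]; apply in_seq in Hin; exists m; split; [lia | exact Hm].
  - intros [m [Hlt Hm]]; exists m; split; [exact Hm | apply in_seq; lia].
Qed.

Definition fair_stream (E : epistemic_space) (str : stream) (s : nat) : Prop :=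
  is_data_stream E str /\ sound_for str s /\ complete_for E str s.

Definition head_ignored (D : stubbornness) (W : set) (str : stream) : Prop :=
  0 < D (compl W (str 0)) /\ forall m, subset W (str (S m)).

Lemma RCB_learner_head_ignored R D E le str n x :
  head_ignored D (worlds E) str ->
  (RCB_learner R D E le (prefix str (S n)) x <-> min_set le (worlds E) x).
Proof.
  intros [Hstubborn Htail]; rewrite prefix_succ.
  apply RCB_learner_ignored_head; [exact Hstubborn | apply Forall_prefix, Htail].
Qed.

Lemma not_identifiable_by_head_ignored R D E s t str_s str_t :
  s <> t -> worlds E s -> worlds E t ->
  fair_stream E str_s s -> fair_stream E str_t t ->
  head_ignored D (worlds E) str_s -> head_ignored D (worlds E) str_t ->
  ~ identifiable_by R D E.
Proof.
  intros Hst Hs Ht [Hds [Hss Hcs]] [Hdt [Hst' Hct]] Higs Higt [le [_ Hid]].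
  destruct (Hid s Hs str_s Hds Hss Hcs) as [ks Hks].
  destruct (Hid t Ht str_t Hdt Hst' Hct) as [kt Hkt].
  set (n := ks + kt).
  assert (Hmin : min_set le (worlds E) s).
  { apply (RCB_learner_head_ignored R D E le str_s n s Higs), (Hks (S n)); [lia|].
    reflexivity. }
  apply Hst, (Hkt (S n)); [lia|].
  apply (RCB_learner_head_ignored R D E le str_t n s Higt); exact Hmin.
Qed.

Definition both : set := fun x => x = 0 \/ x = 1.
Definition zero_only : set := fun x => x = 0.

Definition two_world_space : epistemic_space :=
  ES both (fun o => o = both \/ o = zero_only).

Definition stubborn_once : stubbornness := fun _ => 1.

Definition stream_one : stream := fun _ => both.
Definition stream_zero : stream := fun n => match n with 0 => zero_only | S _ => both end.

Lemma two_world_space_wf : wf_space two_world_space.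
Proof.
  split; [exists 0; left; reflexivity|].
  intros o [-> | ->] x Hx; [exact Hx | left; exact Hx].
Qed.

Lemma stream_one_fair : fair_stream two_world_space stream_one 1.
Proof.
  split; [|split].
  - intro n; left; reflexivity.
  - intro n; right; reflexivity.
  - intros o [-> | ->] Ho; [exists 0; reflexivity | discriminate Ho].
Qed.

Lemma stream_zero_fair : fair_stream two_world_space stream_zero 0.
Proof.
  split; [|split].
  - intros [|n]; [right | left]; reflexivity.
  - intros [|n]; [reflexivity | left; reflexivity].
  - intros o [-> | ->] _; [exists 1 | exists 0]; reflexivity.
Qed.

Lemma two_world_space_not_identifiable_by R :
  ~ identifiable_by R stubborn_once two_world_space.
Proof.
  apply (not_identifiable_by_head_ignored R stubborn_once two_world_space 0 1
           stream_zero stream_one);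
    try solve [discriminate | left; reflexivity | right; reflexivity
              | apply stream_zero_fair | apply stream_one_fair].
  all: split; [unfold stubborn_once; lia | intros m x Hx; exact Hx].
Qed.

Definition seen_zero_learner : learner := fun sigma x =>
  (In zero_only sigma /\ x = 0) \/ (~ In zero_only sigma /\ x = 1).

Lemma seen_zero_learner_identifies : identifies two_world_space seen_zero_learner.
Proof.
  intros s [-> | ->] str _ Hsound Hcomplete.
  - destruct (Hcomplete zero_only (or_intror eq_refl) eq_refl) as [m Hm].
    exists (S m); intros n Hn x.
    assert (Hin : In zero_only (prefix str n))
      by (apply In_prefix; exists m; split; [lia | exact Hm]).
    unfold seen_zero_learner; tauto.
  - exists 0; intros n _ x.
    assert (Hnotin : ~ In zero_only (prefix str n)).
    { rewrite In_prefix; intros [m [_ Hm]].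
      specialize (Hsound m); rewrite Hm in Hsound; discriminate Hsound. }
    unfold seen_zero_learner; split; [tauto | intros ->; right; tauto].
Qed.

Theorem mainTheorem2 :
  forall R : method, exists (E : epistemic_space) (D : stubbornness),
    wf_space E /\ identifiable E /\ ~ identifiable_by R D E.
Proof.
  intro R; exists two_world_space, stubborn_once; split; [|split].
  - exact two_world_space_wf.
  - exists seen_zero_learner; exact seen_zero_learner_identifies.
  - apply two_world_space_not_identifiable_by.
Qed.
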